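(* Let $d\ge2$ and let $(\tau_e)_{e\in\mathbb{E}^d}$ be i.i.d. nonnegative edge weights on $\mathbb{Z}^d$. Let $0<a<b$ be such that for every $\delta>0$, $\mathbb{P}(\tau_e\in[a-\delta,a])>0$ and $\mathbb{P}(\tau_e\in[b,2b])>0$. Let $\epsilon<(b-a)/(2b+3a)$ and let $n,m_1,m_2,m_3$ be positive integers with $$1\le m_2\le\epsilon m_3\le\epsilon^2m_1\le\epsilon^3 n.$$ Then for any $\delta>0$, on the event $E_n$ we have $$T_{\Lambda(n)}(-n\mathbf{e}_1,y)\le a(n+2m_3)+am_2\quad\text{for all }y\in\hat R,$$ and $$T_{\Lambda(n)}(x,0)\ge(a-\delta)(n+2m_3)+bm_2\quad\text{for all }x\in\mathbb{Z}^d\text{ with }\|x\|_1=n.$$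
   Context: $\mathbf{e}_i$ is the $i$-th coordinate vector. $\Lambda(n)=\{x\in\mathbb{Z}^d:\|x\|_1\le n\}$. $R=R(m_1,m_2,m_3)=\{x\in\mathbb{Z}^d:-m_1\le x\cdot\mathbf{e}_1\le m_2,\ \sum_{i=2}^d|x\cdot\mathbf{e}_i|\le m_3\}$, and $\hat R=\{x\in R:\exists y\in\mathbb{Z}^d\setminus R\text{ with }\|x-y\|_1=1\}$. $L=\{k\mathbf{e}_1:k=-n,\dots,-m_1\}$. $E_n$ (which depends on $a,b,\delta,n,m_1,m_2,m_3$) is the event that (1) $\tau_e\in[a-\delta,a]$ for all edges $e=\{x,y\}$ with $x,y\in\hat R\cup L$, and (2) $\tau_e\in[b,2b]$ for all other edges $e=\{x,y\}$ with $x,y\in\Lambda(n)$. $T_{\Lambda(n)}(x,y)$ is the infimum of $\sum_{e\in\gamma}\tau_e$ over nearest-neighbor paths $\gamma$ from $x$ to $y$ all of whose vertices lie in $\Lambda(n)$. *)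

From HB Require Import structures.
From mathcomp Require Import all_boot all_order all_algebra.
From mathcomp Require Import classical_sets reals.
Set Implicit Arguments. Unset Strict Implicit. Unset Printing Implicit Defensive.
Import Order.TTheory GRing.Theory Num.Theory.
Local Open Scope ring_scope.

Definition pt (d : nat) := 'I_d -> int.

Definition norm1 d (x : pt d) : int := \sum_(i < d) `|x i|.
Definition subp d (x y : pt d) : pt d := fun i => x i - y i.
Definition adj d (x y : pt d) : Prop := norm1 (subp x y) = 1.

Definition e1 d : pt d := fun i => ((val i == 0%N) : int).
Definition dotp d (x y : pt d) : int := \sum_(i < d) x i * y i.
Definition zpt d : pt d := fun _ => 0.
Definition scal d (k : int) (x : pt d) : pt d := fun i => k * x i.

Definition inLam d (n : nat) (x : pt d) : Prop := norm1 x <= n%:Z.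

Definition inRect d (m1 m2 m3 : nat) (x : pt d) : Prop :=
  - (m1%:Z) <= dotp x (@e1 d) <= m2%:Z /\
  \sum_(i < d | val i != 0%N) `|dotp x (fun j => ((j == i) : int))| <= m3%:Z.

Definition inRhat d m1 m2 m3 (x : pt d) : Prop :=
  inRect m1 m2 m3 x /\ exists y : pt d, ~ inRect m1 m2 m3 y /\ adj x y.

Definition inL d (n m1 : nat) (x : pt d) : Prop :=
  exists k : int, - (n%:Z) <= k <= - (m1%:Z) /\ x = scal k (@e1 d).

(* A nearest-neighbour path x = p_0, p_1, ..., p_k inside Lambda(n),
   encoded as x and the list [p_1; ...; p_k]. *)
Definition lam_path d (n : nat) (x : pt d) (p : seq (pt d)) (y : pt d) : Prop :=
  last x p = y /\
  (forall i, (i <= size p)%N -> inLam n (nth x (x :: p) i)) /\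
  (forall i, (i < size p)%N -> adj (nth x (x :: p) i) (nth x p i)).

Definition path_weight {R : realType} d (tau : pt d -> pt d -> R)
  (x : pt d) (p : seq (pt d)) : R :=
  \sum_(i < size p) tau (nth x (x :: p) i) (nth x p i).

Definition T_Lam {R : realType} d (tau : pt d -> pt d -> R) (n : nat) (x y : pt d) : R :=
  inf [set w : R | exists p, lam_path n x p y /\ w = path_weight tau x p].

(* The event E_n, as a property of a weight configuration tau
   (tau x y is the weight of the edge {x,y}; symmetry is assumed separately). *)
Definition E_event {R : realType} d (tau : pt d -> pt d -> R)
  (a b delta : R) (n m1 m2 m3 : nat) : Prop :=
  (forall x y : pt d, adj x y ->
     (inRhat m1 m2 m3 x \/ inL n m1 x) -> (inRhat m1 m2 m3 y \/ inL n m1 y) ->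
     a - delta <= tau x y <= a) /\
  (forall x y : pt d, adj x y -> inLam n x -> inLam n y ->
     ~ ((inRhat m1 m2 m3 x \/ inL n m1 x) /\ (inRhat m1 m2 m3 y \/ inL n m1 y)) ->
     b <= tau x y <= 2 * b).

From HB Require Import structures.
From mathcomp Require Import all_boot all_order all_algebra.
From mathcomp Require Import classical_sets reals.
From mathcomp Require Import boolp zify lra.
Import Order.TTheory GRing.Theory Num.Theory.
Local Open Scope ring_scope.
Set Implicit Arguments. Unset Strict Implicit.

(* Write t = x.e1 and s = sum_(i >= 2) |x_i|, so that |x|_1 = |t| + s.

   Upper bound: every edge inside Rhat u L costs at most a, and Rhat u L
   contains a walk from -n e1 to any y in Rhat with at most n + 2 m3 + m2
   steps: along L to -m1 e1, across the left face of R to its rim, along the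
   side of R and, if y lies on the right face, down that face to y.

   Lower bound: a potential argument.  With c = max(a - delta, 0), edges
   inside Rhat u L cost at least c and all other edges of Lambda(n) at least
   b.  Let
     D(t, s) = max(m2 - t + s, min(m2 - t + 2 m3 - s, K (m2 - t))),
     K = (m1 + m2 + 2 m3) / (m1 + m2),
   which on Rhat u L is the length of the route inside Rhat u L from the
   centre m2 e1 of the right face (around the rim when t <= -m1), and
     Psi = max(min(b |x|_1, b m2 + c D), b |x|_1 + mu),
     mu = b m2 + c (n + 2 m3) - b n.
   The smallness of eps makes Psi = b m2 + c D on Rhat u L, where D changes by
   at most 1 along an edge; elsewhere Psi is b-Lipschitz for |.|_1 since D is
   K-Lipschitz and c K <= b.  Hence Psi x - Psi 0 <= T(x, 0), while Psi 0 <= 0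
   and Psi x >= b n + mu whenever |x|_1 = n. *)

Section Coordinates.
Variable d : nat.
Implicit Types (x y : pt d) (i j : 'I_d) (k : int).

Definition set_coord y i k : pt d := fun j => if j == i then k else y j.

Lemma set_coord_eq y i k : set_coord y i k i = k.
Proof. by rewrite /set_coord eqxx. Qed.

Lemma set_coord_neq y i j k : j != i -> set_coord y i k j = y j.
Proof. by rewrite /set_coord => /negbTE ->. Qed.

Lemma set_coord_id y i : set_coord y i (y i) = y.
Proof. by apply: funext => j; rewrite /set_coord; case: eqP => // ->. Qed.

Lemma set_coord_set_coord y i k k' : set_coord (set_coord y i k) i k' = set_coord y i k'.
Proof. by apply: funext => j; rewrite /set_coord; case: (j == i). Qed.

Lemma norm1_ge0 y : 0 <= norm1 y.
Proof. exact: sumr_ge0. Qed.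

Lemma norm1_zpt : norm1 (@zpt d) = 0.
Proof. by rewrite /norm1 big1 // => i _; rewrite normr0. Qed.

Lemma norm1_eq0 y : norm1 y = 0 -> y = @zpt d.
Proof.
move=> y0; apply: funext => i; apply/eqP; rewrite -normr_eq0 eq_le normr_ge0 andbT.
by rewrite -y0 /norm1 (bigD1 i) //= lerDl sumr_ge0.
Qed.

Lemma norm1_neq0 y : norm1 y != 0 -> exists i, y i != 0.
Proof.
move=> y_neq0; apply/existsP; apply: contraNT y_neq0 => /existsPn y0.
by rewrite /norm1 big1 // => i _; have /negPn/eqP -> := y0 i; rewrite normr0.
Qed.

Lemma norm1_set_coord y i k : norm1 (set_coord y i k) = norm1 y - `|y i| + `|k|.
Proof.
rewrite /norm1 (bigD1 i) //= [in RHS](bigD1 i) //= set_coord_eq.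
rewrite (eq_bigr (fun j => `|y j|)) => [|j ji]; last by rewrite set_coord_neq.
by rewrite [`|y i| + _]addrC addrK addrC.
Qed.

Lemma adj_sym x y : adj x y -> adj y x.
Proof. by rewrite /adj /norm1 => <-; apply: eq_bigr => i _; rewrite /subp distrC. Qed.

Lemma adj_set_coord y i k : `|y i - k| = 1 -> adj y (set_coord y i k).
Proof.
rewrite /adj /norm1 (bigD1 i) //= /subp set_coord_eq => ->.
by rewrite big1 ?addr0 // => j ji; rewrite set_coord_neq // subrr normr0.
Qed.

End Coordinates.

Definition step_in (k : int) : int := if 0 < k then k - 1 else k + 1.
Definition step_out (k : int) : int := if 0 <= k then k + 1 else k - 1.

Lemma norm_step_in k : k != 0 -> `|step_in k| = `|k| - 1.
Proof. by move=> /eqP k0; rewrite /step_in; case: ifP; lia. Qed.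

Lemma dist_step_in k : `|k - step_in k| = 1.
Proof. by rewrite /step_in; case: ifP; lia. Qed.

Lemma norm_step_out k : `|step_out k| = `|k| + 1.
Proof. by rewrite /step_out; case: ifP; lia. Qed.

Lemma dist_step_out k : `|k - step_out k| = 1.
Proof. by rewrite /step_out; case: ifP; lia. Qed.

Section Paths.
Variables (d n : nat).
Implicit Types (u v w x y : pt d) (p q : seq (pt d)).

Lemma lam_path_nil u v : lam_path n u [::] v -> u = v.
Proof. by case. Qed.

Lemma lam_path0 u : inLam n u -> lam_path n u [::] u.
Proof. by move=> Lu; split=> //; split=> // [[|i]]. Qed.

Lemma lam_path_inLam u p v : lam_path n u p v -> inLam n u.
Proof. by case=> _ [Lp _]; apply: (Lp 0%N). Qed.

Lemma lam_path_consE u v w q :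
  lam_path n u (v :: q) w <-> [/\ inLam n u, adj u v & lam_path n v q w].
Proof.
have nth_shift i : (i < size q)%N -> nth u (v :: q) i = nth v (v :: q) i.
  by move=> iq; apply: set_nth_default; rewrite /= ltnS ltnW.
rewrite /lam_path /=; split.
- move=> [-> [Lp Ap]]; split; [exact: (Lp 0%N) | exact: (Ap 0%N) | split=> //; split].
  + move=> i iq; have := Lp i.+1 iq; rewrite /= (set_nth_default v) //.
  + move=> i iq; have := Ap i.+1 iq; rewrite /= nth_shift // (set_nth_default v) //.
- move=> [Lu Auv [-> [Lq Aq]]]; split=> //; split.
  + by case=> [|i] //= iq; have := Lq i iq; rewrite (set_nth_default u).
  + case=> [|i] //= iq; have := Aq i iq.
    by rewrite nth_shift // (set_nth_default (s := q) u).
Qed.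

Lemma lam_path_cat u v w p q :
  lam_path n u p v -> lam_path n v q w -> lam_path n u (p ++ q) w.
Proof.
elim: p u => [|x p IH] u /=; first by move=> /lam_path_nil ->.
by move=> /lam_path_consE [Lu Aux Hp] Hq; apply/lam_path_consE; split=> //; apply: IH.
Qed.

Lemma lam_path_to_origin u : inLam n u -> exists p, lam_path n u p (@zpt d).
Proof.
rewrite /inLam; have [N] := ubnP `|norm1 u|%N; elim: N u => // N IH u.
have [u0 _ _|u_neq0 uN Lu] := eqVneq (norm1 u) 0.
  by exists [::]; rewrite (norm1_eq0 u0); apply: lam_path0; rewrite /inLam norm1_zpt.
have [i ui] := norm1_neq0 u_neq0.
set v := set_coord u i (step_in (u i)).
have nv : norm1 v = norm1 u - 1 by rewrite norm1_set_coord norm_step_in //; lia.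
have u_ge0 := norm1_ge0 u.
have [p Hp] : exists p, lam_path n v p (@zpt d) by apply: IH; lia.
exists (v :: p); apply/lam_path_consE; split=> //.
exact/adj_set_coord/dist_step_in.
Qed.

Variables (R : realType) (tau : pt d -> pt d -> R).

Lemma path_weight_cons u v q :
  path_weight tau u (v :: q) = tau u v + path_weight tau v q.
Proof.
rewrite /path_weight /= big_ord_recl /=; congr (_ + _); apply: eq_bigr => i _.
have iq := ltn_ord i.
by rewrite /bump /= (set_nth_default (s := v :: q) v) ?(set_nth_default (s := q) v) // ltnW.
Qed.

Lemma path_weight_cat u p q :
  path_weight tau u (p ++ q) = path_weight tau u p + path_weight tau (last u p) q.
Proof.
elim: p u => [|v p IH] u /=; first by rewrite /path_weight big_ord0 add0r.
by rewrite !path_weight_cons IH addrA.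
Qed.

Definition reach_within (r : R) u v :=
  exists p, lam_path n u p v /\ path_weight tau u p <= r.

Lemma reach_within0 u : inLam n u -> reach_within 0 u u.
Proof. by move=> Lu; exists [::]; rewrite /path_weight big_ord0; split=> //; apply: lam_path0. Qed.

Lemma reach_within_edge u v :
  inLam n u -> inLam n v -> adj u v -> reach_within (tau u v) u v.
Proof.
move=> Lu Lv Auv; exists [:: v]; rewrite path_weight_cons /path_weight big_ord0 addr0.
by split=> //; apply/lam_path_consE; split=> //; apply: lam_path0.
Qed.

Lemma reach_within_le r r' u v : r <= r' -> reach_within r u v -> reach_within r' u v.
Proof. by move=> rr' [p [Hp Wp]]; exists p; split=> //; apply: le_trans rr'. Qed.

Lemma reach_within_trans r r' u v w :
  reach_within r u v -> reach_within r' v w -> reach_within (r + r') u w.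
Proof.
move=> [p [Hp Wp]] [q [Hq Wq]]; exists (p ++ q); split; first exact: lam_path_cat Hp Hq.
by rewrite path_weight_cat (proj1 Hp) lerD.
Qed.

Lemma reach_within_chain r (f : nat -> pt d) k :
  inLam n (f 0%N) -> (forall j, (j < k)%N -> reach_within r (f j) (f j.+1)) ->
  reach_within (r * k%:R) (f 0%N) (f k).
Proof.
move=> L0; elim: k => [|k IH] Hf; first by rewrite mulr0; apply: reach_within0.
rewrite mulrSr mulrDr mulr1; apply: reach_within_trans (Hf k (ltnSn k)).
by apply: IH => j jk; apply: Hf; apply: ltnW.
Qed.

Lemma T_Lam_le r u v :
  (forall x y, 0 <= tau x y) -> reach_within r u v -> T_Lam tau n u v <= r.
Proof.
move=> tau_ge0 [p [Hp Wp]]; apply: le_trans Wp; apply: ge_inf; last by exists p.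
by exists 0 => _ [q [_ ->]]; apply: sumr_ge0.
Qed.

Lemma potential_le_path_weight (P : pt d -> R) :
  (forall x y, inLam n x -> inLam n y -> adj x y -> P x - P y <= tau x y) ->
  forall p u v, lam_path n u p v -> P u - P v <= path_weight tau u p.
Proof.
move=> Pedge; elim=> [|w p IH] u v.
  by move=> /lam_path_nil ->; rewrite subrr /path_weight big_ord0.
move=> /lam_path_consE [Lu Auw Hp]; rewrite path_weight_cons -(subrKA (P w)).
by apply: lerD; [apply: Pedge (lam_path_inLam Hp) Auw | apply: IH].
Qed.

Lemma potential_le_T_Lam (P : pt d -> R) u :
  (forall x y, inLam n x -> inLam n y -> adj x y -> P x - P y <= tau x y) ->
  inLam n u -> P u - P (@zpt d) <= T_Lam tau n u (@zpt d).
Proof.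
move=> Pedge Lu; have [p0 Hp0] := lam_path_to_origin Lu.
apply: lb_le_inf; first by exists (path_weight tau u p0), p0.
by move=> _ [p [Hp ->]]; apply: potential_le_path_weight Hp.
Qed.

End Paths.

Section AxialCoordinates.
Variable d : nat.
Implicit Types (x y : pt d.+1) (k : int).

Definition perp_norm y : int := \sum_(i < d.+1 | val i != 0%N) `|y i|.

Lemma val_neq0 (i : 'I_d.+1) : (val i != 0%N) = (i != ord0).
Proof. by case: i => [[|i] ?]. Qed.

Lemma perp_norm_ge0 y : 0 <= perp_norm y.
Proof. exact: sumr_ge0. Qed.

Lemma norm1_axial y : norm1 y = `|y ord0| + perp_norm y.
Proof. by rewrite /norm1 (bigD1 ord0). Qed.

Lemma inLam_axial n y : `|y ord0| + perp_norm y <= n%:Z -> inLam n y.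
Proof. by rewrite /inLam norm1_axial. Qed.

Lemma inRect_axial m1 m2 m3 y :
  inRect m1 m2 m3 y <-> - (m1%:Z) <= y ord0 <= m2%:Z /\ perp_norm y <= m3%:Z.
Proof.
have dotp_delta i : dotp y (fun j => ((j == i) : int)) = y i.
  by rewrite /dotp (bigD1 i) //= eqxx mulr1 big1 ?addr0 // => j /negbTE ->; rewrite mulr0.
rewrite /inRect (eq_bigr _ (fun i _ => congr1 _ (dotp_delta i))).
by have -> : dotp y (@e1 _) = y ord0 by apply: (dotp_delta ord0).
Qed.

Lemma adj_axial x y : adj x y -> `|x ord0 - y ord0| + `|perp_norm x - perp_norm y| <= 1.
Proof.
rewrite /adj norm1_axial => <-; rewrite lerD2l /perp_norm -sumrB.
apply: le_trans (ler_norm_sum _ _ _) _.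
by apply: ler_sum => i _; apply: ler_dist_dist.
Qed.

Lemma perp_norm_set_coord0 y k : perp_norm (set_coord y ord0 k) = perp_norm y.
Proof. by apply: eq_bigr => i; rewrite val_neq0 => i0; rewrite set_coord_neq. Qed.

Lemma set_coord_ord0 y i k : i != ord0 -> set_coord y i k ord0 = y ord0.
Proof. by move=> i0; rewrite set_coord_neq // eq_sym. Qed.

Lemma perp_norm_set_coord y i k : i != ord0 ->
  perp_norm (set_coord y i k) = perp_norm y - `|y i| + `|k|.
Proof.
rewrite -val_neq0 => i0; rewrite /perp_norm (bigD1 i i0) /= [in RHS](bigD1 i i0) /=.
rewrite set_coord_eq (eq_bigr (fun j => `|y j|)) => [|j /andP [_ ji]]; last first.
  by rewrite set_coord_neq.
by rewrite [`|y i| + _]addrC addrK addrC.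
Qed.

Lemma perp_norm_eq0 y : perp_norm y = 0 -> y = scal (y ord0) (@e1 _).
Proof.
move=> y0; apply: funext => i; rewrite /scal /e1.
have [i0|i0] := eqVneq (val i) 0%N.
  by rewrite (_ : i = ord0) ?mulr1 //; apply: val_inj.
rewrite mulr0; apply/eqP; rewrite -normr_eq0 eq_le normr_ge0 andbT.
by rewrite -y0 /perp_norm (bigD1 i i0) /= lerDl sumr_ge0.
Qed.

Lemma perp_norm_neq0 y : perp_norm y != 0 -> exists2 i, i != ord0 & y i != 0.
Proof.
move=> y_neq0; apply/exists_inP; apply: contraNT y_neq0 => /exists_inPn y0.
rewrite /perp_norm big1 // => i; rewrite val_neq0 => i0.
by have /negPn/eqP -> := y0 i i0; rewrite normr0.
Qed.

Lemma scal_e1_ord0 k : scal k (@e1 d.+1) ord0 = k.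
Proof. by rewrite /scal /e1 /= mulr1. Qed.

Lemma perp_norm_scal_e1 k : perp_norm (scal k (@e1 d.+1)) = 0.
Proof. by rewrite /perp_norm big1 // => i /negbTE i0; rewrite /scal /e1 /= i0 mulr0 normr0. Qed.

Lemma adj_scal_e1 k k' : `|k - k'| = 1 -> adj (scal k (@e1 d.+1)) (scal k' (@e1 d.+1)).
Proof.
have -> : scal k' (@e1 d.+1) = set_coord (scal k (@e1 d.+1)) ord0 k'.
  apply: funext => i; rewrite /set_coord /scal /e1 -val_eqE /=.
  by case: (val i == 0%N); rewrite ?mulr1 ?mulr0.
by rewrite -{1}(scal_e1_ord0 k); apply: adj_set_coord.
Qed.

Lemma inL_axial n m1 y : inL n m1 y ->
  - (n%:Z) <= y ord0 <= - (m1%:Z) /\ perp_norm y = 0.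
Proof. by move=> [k [kb ->]]; rewrite scal_e1_ord0 perp_norm_scal_e1. Qed.

Lemma inRhat_axial m1 m2 m3 y : inRhat m1 m2 m3 y ->
  [/\ - (m1%:Z) <= y ord0 <= m2%:Z, perp_norm y <= m3%:Z &
      [\/ y ord0 = - (m1%:Z), y ord0 = m2%:Z | perp_norm y = m3%:Z]].
Proof.
move=> [/inRect_axial [yt ys] [z [/inRect_axial z_out /adj_axial yz]]]; split=> //.
have := perp_norm_ge0 z; have := perp_norm_ge0 y.
have [|/eqP ?] := eqVneq (y ord0) (- (m1%:Z)); first by constructor 1.
have [|/eqP ?] := eqVneq (y ord0) (m2%:Z); first by constructor 2.
have [|/eqP ?] := eqVneq (perp_norm y) (m3%:Z); first by constructor 3.
by move=> *; exfalso; apply: z_out; lia.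
Qed.

End AxialCoordinates.

Definition inRL d n m1 m2 m3 (x : pt d) := inRhat m1 m2 m3 x \/ inL n m1 x.

Section UpperBound.
Variables (R : realType) (d : nat) (tau : pt d.+2 -> pt d.+2 -> R) (a : R).
Variables (n m1 m2 m3 : nat).
Hypothesis tau_RL : forall x y, adj x y -> inRL n m1 m2 m3 x -> inRL n m1 m2 m3 y -> tau x y <= a.
Hypothesis a_ge0 : 0 <= a.
Hypothesis m13n : (m1 + m3 <= n)%N.
Hypothesis m23n : (m2 + m3 <= n)%N.
Implicit Types (x y z : pt d.+2).

Let i1 : 'I_d.+2 := @Ordinal d.+2 1 isT.

Lemma inRhat_intro y :
  - (m1%:Z) <= y ord0 <= m2%:Z -> perp_norm y <= m3%:Z ->
  [\/ y ord0 = - (m1%:Z), y ord0 = m2%:Z | perp_norm y = m3%:Z] -> inRhat m1 m2 m3 y.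
Proof.
move=> yt ys yface; split; first exact/inRect_axial.
case: yface => [y0|y0|y0].
- exists (set_coord y ord0 (y ord0 - 1)); split; last by apply: adj_set_coord; lia.
  by move/inRect_axial; rewrite set_coord_eq y0; lia.
- exists (set_coord y ord0 (y ord0 + 1)); split; last by apply: adj_set_coord; lia.
  by move/inRect_axial; rewrite set_coord_eq y0; lia.
- exists (set_coord y i1 (step_out (y i1))); split; last exact/adj_set_coord/dist_step_out.
  by move/inRect_axial; rewrite perp_norm_set_coord // norm_step_out y0; lia.
Qed.

Lemma reach_within_RL x y : inRL n m1 m2 m3 x -> inRL n m1 m2 m3 y ->
  inLam n x -> inLam n y -> adj x y -> reach_within n tau a x y.
Proof.
move=> Sx Sy Lx Ly Axy.
exact: reach_within_le (tau_RL Axy Sx Sy) (reach_within_edge tau Lx Ly Axy).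
Qed.

Lemma reach_along_L :
  reach_within n tau (a * (n - m1)%:R) (scal (- n%:Z) (@e1 _)) (scal (- m1%:Z) (@e1 _)).
Proof.
pose f (j : nat) := scal (- n%:Z + j%:Z) (@e1 d.+2).
have Lf j : (j <= n)%N -> inLam n (f j).
  by move=> jn; apply: inLam_axial; rewrite /f scal_e1_ord0 perp_norm_scal_e1; lia.
have Sf j : (j <= n - m1)%N -> inRL n m1 m2 m3 (f j).
  by move=> jn; right; exists (- n%:Z + j%:Z); split=> //; lia.
have := @reach_within_chain _ n _ tau a f (n - m1) (Lf 0%N isT).
rewrite /f addr0 (_ : - n%:Z + (n - m1)%:Z = - m1%:Z); last by lia.
apply=> j jn; apply: reach_within_RL; [apply: Sf; lia | apply: Sf; lia |
  apply: Lf; lia | apply: Lf; lia | apply: adj_scal_e1; lia].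
Qed.

Lemma reach_left_face N y : y ord0 = - m1%:Z -> perp_norm y = N%:Z -> (N <= m3)%N ->
  reach_within n tau (a * N%:R) (scal (- m1%:Z) (@e1 _)) y.
Proof.
elim: N y => [|N IH] y yt ys yN.
  rewrite mulr0 (perp_norm_eq0 ys) yt; apply: reach_within0.
  by apply: inLam_axial; rewrite scal_e1_ord0 perp_norm_scal_e1; lia.
have [i i0 yi] : exists2 i, i != ord0 & y i != 0 by apply: perp_norm_neq0; rewrite ys.
set y' := set_coord y i (step_in (y i)).
have y's : perp_norm y' = N%:Z by rewrite perp_norm_set_coord // norm_step_in // ys; lia.
have y't : y' ord0 = - m1%:Z by rewrite /y' set_coord_ord0.
rewrite mulrSr mulrDr mulr1; apply: reach_within_trans (IH y' y't y's (ltnW yN)) _.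
apply: reach_within_RL.
- left; apply: inRhat_intro; rewrite ?y't ?y's; by [lia|constructor 1].
- left; apply: inRhat_intro; rewrite ?yt ?ys; by [lia|constructor 1].
- by apply: inLam_axial; rewrite y't y's; lia.
- by apply: inLam_axial; rewrite yt ys; lia.
- exact/adj_sym/adj_set_coord/dist_step_in.
Qed.

Lemma reach_along_side k y : (k <= m1 + m2)%N -> perp_norm y = m3%:Z ->
  reach_within n tau (a * k%:R) (set_coord y ord0 (- m1%:Z)) (set_coord y ord0 (- m1%:Z + k%:Z)).
Proof.
move=> km ys; pose f (j : nat) := set_coord y ord0 (- m1%:Z + j%:Z).
have Lf j : (j <= k)%N -> inLam n (f j).
  by move=> jk; apply: inLam_axial; rewrite /f perp_norm_set_coord0 ys set_coord_eq; lia.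
have Sf j : (j <= k)%N -> inRL n m1 m2 m3 (f j).
  move=> jk; left; apply: inRhat_intro; rewrite /f ?set_coord_eq ?perp_norm_set_coord0 ?ys;
    by [lia | constructor 3].
have := @reach_within_chain _ n _ tau a f k (Lf 0%N isT); rewrite /f addr0.
apply=> j jk; apply: reach_within_RL; [apply: Sf; lia | apply: Sf; lia |
  apply: Lf; lia | apply: Lf; lia | ].
rewrite -[X in adj _ X](set_coord_set_coord y ord0 (- m1%:Z + j%:Z)).
by apply: adj_set_coord; rewrite set_coord_eq; lia.
Qed.

Lemma reach_right_face N y : y ord0 = m2%:Z -> perp_norm y + N%:Z = m3%:Z ->
  exists2 z, z ord0 = m2%:Z /\ perp_norm z = m3%:Z & reach_within n tau (a * N%:R) z y.
Proof.
elim: N y => [|N IH] y yt ys.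
  exists y; first by rewrite -ys addr0.
  by rewrite mulr0; apply/reach_within0/inLam_axial; have := perp_norm_ge0 y; lia.
set y' := set_coord y i1 (step_out (y i1)).
have y's : perp_norm y' = perp_norm y + 1 by rewrite perp_norm_set_coord // norm_step_out; lia.
have y't : y' ord0 = m2%:Z by rewrite /y' set_coord_ord0.
have [z zface Hz] := IH y' y't ltac:(lia).
exists z => //; rewrite mulrSr mulrDr mulr1; apply: reach_within_trans Hz _.
have := perp_norm_ge0 y => ys0.
apply: reach_within_RL.
- left; apply: inRhat_intro; rewrite ?y't ?y's; by [lia|constructor 2].
- left; apply: inRhat_intro; rewrite ?yt; by [lia|constructor 2].
- by apply: inLam_axial; rewrite y't y's; lia.
- by apply: inLam_axial; rewrite yt; lia.
- exact/adj_sym/adj_set_coord/dist_step_out.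
Qed.

Lemma reach_Rhat y : inRhat m1 m2 m3 y ->
  reach_within n tau (a * (n + 2 * m3 + m2)%:R) (scal (- n%:Z) (@e1 _)) y.
Proof.
move=> /inRhat_axial [yt ys yface]; have ys0 := perp_norm_ge0 y.
have budget k : (k <= n + 2 * m3 + m2)%N -> a * k%:R <= a * (n + 2 * m3 + m2)%:R.
  by move=> kb; rewrite ler_wpM2l // ler_nat.
have toL := reach_along_L.
have toRim z : perp_norm z = m3%:Z ->
    reach_within n tau (a * (n - m1 + m3)%:R) (scal (- n%:Z) (@e1 _)) (set_coord z ord0 (- m1%:Z)).
  move=> zs; rewrite natrD mulrDr.
  apply: reach_within_trans toL (reach_left_face (set_coord_eq _ _ _) _ (leqnn m3)).
  by rewrite perp_norm_set_coord0.
case: yface => [y0|y0|y0].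
- have [N yN] : exists N : nat, perp_norm y = N%:Z by exists (absz (perp_norm y)); lia.
  apply: reach_within_le (reach_within_trans toL (reach_left_face y0 yN _)); last by lia.
  by rewrite -mulrDr -natrD budget //; lia.
- have [N yN] : exists N : nat, perp_norm y + N%:Z = m3%:Z.
    by exists (absz (m3%:Z - perp_norm y)); lia.
  have [z [z0 zs] zy] := reach_right_face y0 yN.
  have side := reach_along_side (leqnn (m1 + m2)) zs.
  rewrite (_ : - m1%:Z + (m1 + m2)%N%:Z = z ord0) ?set_coord_id in side; last by lia.
  apply: reach_within_le (reach_within_trans (reach_within_trans (toRim z zs) side) zy).
  by rewrite -!mulrDr -!natrD budget //; lia.
- have [k yk] : exists k : nat, y ord0 + m1%:Z = k%:Z by exists (absz (y ord0 + m1%:Z)); lia.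
  have side := reach_along_side (k := k) ltac:(lia) y0.
  rewrite (_ : - m1%:Z + k%:Z = y ord0) ?set_coord_id in side; last by lia.
  apply: reach_within_le (reach_within_trans (toRim y y0) side).
  by rewrite -mulrDr -natrD budget //; lia.
Qed.

End UpperBound.

Section Shell.
Variables (R : realFieldType) (M1 M2 M3 N K : R).
Implicit Types (t s e : R).

Lemma max_shift_le x y x' y' e :
  x <= x' + e -> y <= y' + e -> Num.max x y <= Num.max x' y' + e.
Proof.
move=> xx' yy'; rewrite ge_max; apply/andP; split.
  by apply: le_trans xx' _; rewrite lerD2r le_max lexx.
by apply: le_trans yy' _; rewrite lerD2r le_max lexx orbT.
Qed.

Lemma min_shift_le x y x' y' e :
  x <= x' + e -> y <= y' + e -> Num.min x y <= Num.min x' y' + e.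
Proof.
move=> xx' yy'; rewrite -lerBlDr le_min; apply/andP; split; rewrite lerBlDr.
  by apply: le_trans xx'; rewrite ge_min lexx.
by apply: le_trans yy'; rewrite ge_min lexx orbT.
Qed.

(* The image of Rhat u L under x |-> (t, s), for M1 = m1, M2 = m2, M3 = m3 and N = n. *)
Definition shadow t s :=
  (- M1 <= t <= M2 /\ 0 <= s <= M3 /\ [\/ t = - M1, t = M2 | s = M3]) \/
  (s = 0 /\ - N <= t <= - M1).

Definition shell_dist t s :=
  Num.max (M2 - t + s) (Num.min (M2 - t + 2 * M3 - s) (K * (M2 - t))).

Lemma shell_dist_lipschitz t s t' s' : 1 <= K ->
  `|t - t'| + `|s - s'| <= 1 -> shell_dist t s <= shell_dist t' s' + K.
Proof.
move=> K_ge1 tt'; have t't := ler_norm (t' - t); rewrite distrC in t't.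
have s's := ler_norm (s' - s); rewrite distrC in s's.
have ss' := ler_norm (s - s'); have ss'0 := normr_ge0 (s - s').
apply: max_shift_le; first lra.
apply: min_shift_le; first lra.
have : K * (t' - t) <= K * 1 by rewrite ler_wpM2l //; lra.
lra.
Qed.

Lemma shell_dist_left t s : 1 <= K -> K * (M1 + M2) = M1 + M2 + 2 * M3 ->
  t <= - M1 -> 0 <= s <= M3 ->
  shell_dist t s = M2 - t + 2 * M3 - s.
Proof.
move=> K_ge1 K_M12 tM1 /andP [s0 sM3].
have : 0 <= (K - 1) * ((M2 - t) - (M1 + M2)) by apply: mulr_ge0; lra.
by move=> K1; rewrite /shell_dist min_l ?max_r //; nra.
Qed.

Lemma shell_dist_right t s : 0 <= K -> t = M2 \/ s = M3 -> 0 <= s ->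
  shell_dist t s = M2 - t + s.
Proof.
move=> K_ge0 face s0; rewrite /shell_dist max_l // ge_min.
by case: face => ->; [rewrite subrr mulr0; lra | lra].
Qed.

Lemma shell_dist_shadow t s : 1 <= K -> K * (M1 + M2) = M1 + M2 + 2 * M3 ->
  0 <= M3 -> shadow t s ->
  (t <= - M1 -> shell_dist t s = M2 - t + 2 * M3 - s) /\
  (- M1 < t -> shell_dist t s = M2 - t + s).
Proof.
move=> K_ge1 K_M12 M3_ge0.
case=> [[/andP [t1 t2] [sb face]]|[-> /andP [t1 t2]]]; split=> tM1.
- exact: shell_dist_left K_ge1 K_M12 tM1 sb.
- apply: shell_dist_right; [lra | case: face => tf; [lra | by left | by right] | by case/andP: sb].
- by apply: shell_dist_left => //; lra.
- lra.
Qed.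

Lemma shell_dist_step t s t' s' : 1 <= K -> K * (M1 + M2) = M1 + M2 + 2 * M3 ->
  0 <= M3 -> 1 < M1 + M2 ->
  shadow t s -> shadow t' s' -> `|t - t'| + `|s - s'| <= 1 ->
  [\/ t <= - M1 /\ t' <= - M1, - M1 < t /\ - M1 < t' | s = s'] ->
  shell_dist t s <= shell_dist t' s' + 1.
Proof.
move=> K_ge1 K_M12 M3_ge0 M12 Sts Sts' tt' side.
have [L Rt] := shell_dist_shadow K_ge1 K_M12 M3_ge0 Sts.
have [L' Rt'] := shell_dist_shadow K_ge1 K_M12 M3_ge0 Sts'.
have t't := ler_norm (t' - t); rewrite distrC in t't.
have tt'_le := ler_norm (t - t'); have tt'_ge0 := normr_ge0 (t - t').
have s's := ler_norm (s' - s); rewrite distrC in s's.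
have ss'_le := ler_norm (s - s'); have ss'_ge0 := normr_ge0 (s - s').
case: side => [[tl t'l]|[tr t'r]|ss']; first by rewrite L // L' //; lra.
  by rewrite Rt // Rt' //; lra.
subst s'; have [tl|tr] := lerP t (- M1); have [t'l|t'r] := lerP t' (- M1).
- by rewrite L // L' //; lra.
- by rewrite L // Rt' //; case: Sts' => [[_ [_ []]]|[_ /andP []]]; lra.
- by rewrite Rt // L' //; case: Sts => [[_ [_ []]]|[_ /andP []]]; lra.
- by rewrite Rt // Rt' //; lra.
Qed.

Variables (b c : R).

Let mu := b * M2 + c * (N + 2 * M3) - b * N.

Definition shell_pot t s := b * M2 + c * shell_dist t s.

Definition potential t s :=
  Num.max (Num.min (b * (`|t| + s)) (shell_pot t s)) (b * (`|t| + s) + mu).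

Lemma potential_lipschitz t s t' s' : 1 <= K -> 0 <= c -> c * K <= b ->
  `|t - t'| + `|s - s'| <= 1 -> potential t s <= potential t' s' + b.
Proof.
move=> K_ge1 c0 cKb tt'.
have b0 : 0 <= b by apply: le_trans cKb; apply: mulr_ge0 => //; lra.
have norm_step : b * (`|t| + s) <= b * (`|t'| + s') + b.
  have tt'_ge := lerB_dist t t'; have ss'_le := ler_norm (s - s').
  have : b * (`|t| + s - (`|t'| + s')) <= b * 1 by rewrite ler_wpM2l //; lra.
  lra.
have pot_step : shell_pot t s <= shell_pot t' s' + b.
  have : c * shell_dist t s <= c * (shell_dist t' s' + K).
    by rewrite ler_wpM2l // shell_dist_lipschitz.
  rewrite /shell_pot; lra.
by apply: max_shift_le; [apply: min_shift_le | lra].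
Qed.

Lemma shell_pot_shadow t s : 1 <= K -> K * (M1 + M2) = M1 + M2 + 2 * M3 ->
  0 <= c -> c <= b -> 0 <= M1 -> 0 <= M2 -> 0 <= M3 ->
  (b + c) * M2 <= (b - c) * M3 ->
  (b + c) * M2 + 2 * c * M3 <= (b - c) * M1 ->
  b * (M1 + M2 + M3) + 2 * c * M3 <= (b - c) * N ->
  shadow t s -> potential t s = shell_pot t s.
Proof.
move=> K_ge1 K_M12 c0 cb M1_0 M2_0 M3_0 F1 F2 F3 Sts.
have [L Rt] := shell_dist_shadow K_ge1 K_M12 M3_0 Sts.
suff [up low] : shell_pot t s <= b * (`|t| + s) /\ b * (`|t| + s) + mu <= shell_pot t s.
  by rewrite /potential min_r // max_l.
rewrite /shell_pot /mu; have t0 := normr_ge0 t.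
case: Sts => [[/andP [t1 t2] [/andP [s1 s2] face]]|[s0 /andP [t1 t2]]].
- have sd0 : 0 <= shell_dist t s by have [/L|/Rt] := lerP t (- M1); lra.
  have csd0 : 0 <= c * shell_dist t s by apply: mulr_ge0.
  have tM12 : `|t| <= M1 + M2 by rewrite ler_norml; apply/andP; split; lra.
  have btM : b * (`|t| + s) <= b * (M1 + M2 + M3) by apply: ler_wpM2l; lra.
  split; last by nra.
  have [tM1|tM1] := lerP t (- M1).
  + rewrite L // ler0_norm; last by lra.
    have M1t : (b - c) * M1 <= (b - c) * (- t) by apply: ler_wpM2l; lra.
    have bcs : 0 <= (b + c) * s by apply: mulr_ge0; lra.
    nra.
  + rewrite Rt //; case: face => [|tM2|sM3]; first lra.
    * have bcs : 0 <= (b - c) * s by apply: mulr_ge0; lra.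
      by rewrite tM2 ger0_norm //; nra.
    * have ct : c * (- t) <= b * `|t|.
        apply: le_trans (_ : c * `|t| <= _); first by apply: ler_wpM2l; rewrite // -normrN ler_norm.
        by apply: ler_wpM2r.
      by rewrite sM3; nra.
- rewrite L // s0 !subr0 addr0 ler0_norm; last by lra.
  have M1t : (b - c) * M1 <= (b - c) * (- t) by apply: ler_wpM2l; lra.
  have Nt : 0 <= (b - c) * (N + t) by apply: mulr_ge0; lra.
  have cM2 : 0 <= c * M2 by apply: mulr_ge0.
  by split; nra.
Qed.

End Shell.

Lemma scale_inequalities (R : realFieldType) (a b c eps M1 M2 M3 N : R) :
  0 < a -> a < b -> 0 <= c -> c <= a -> eps < (b - a) / (2 * b + 3 * a) ->
  0 <= M1 -> 0 <= M3 -> 0 <= N ->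
  1 <= M2 -> M2 <= eps * M3 -> eps * M3 <= eps ^+ 2 * M1 -> eps ^+ 2 * M1 <= eps ^+ 3 * N ->
  [/\ (b + c) * M2 <= (b - c) * M3,
      (b + c) * M2 + 2 * c * M3 <= (b - c) * M1,
      b * (M1 + M2 + M3) + 2 * c * M3 <= (b - c) * N,
      M2 <= M3 & M3 <= M1].
Proof.
move=> a0 ab c0 ca eps_lt M1_0 M3_0 N0 M2_1 M23 M31 M1N.
have den0 : 0 < 2 * b + 3 * a by lra.
have eps_den : eps * (2 * b + 3 * a) < b - a by rewrite -ltr_pdivlMr.
have eps0 : 0 < eps.
  rewrite ltNge; apply/negP => eps_le0.
  have : eps * M3 <= 0 by apply: mulr_le0_ge0.
  lra.
have eps_half : eps * 2 < 1 by nra.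
have M3_M1 : M3 <= eps * M1 by rewrite -(ler_pM2l eps0) mulrA -expr2.
have M1_N : M1 <= eps * N.
  by rewrite -(ler_pM2l (exprn_gt0 2 eps0)) mulrA -exprSr.
have epsM1 : eps * M1 <= M1 by nra.
have epsN : eps * N <= N by nra.
have M2_M3 : M2 <= M3 by nra.
have M3_N : M3 <= eps * (eps * N) by nra.
have eps2N : eps * (eps * N) * 2 <= eps * N by nra.
split; nra.
Qed.

Lemma exists_slope (R : realFieldType) (b c M1 M2 M3 : R) :
  0 < M1 + M2 -> 0 <= M3 -> c * (M1 + M2 + 2 * M3) <= b * (M1 + M2) ->
  exists K, [/\ 1 <= K, K * (M1 + M2) = M1 + M2 + 2 * M3 & c * K <= b].
Proof.
move=> M12 M3_0 cb; exists ((M1 + M2 + 2 * M3) / (M1 + M2)).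
rewrite divfK ?gt_eqF // ler_pdivlMr // mul1r mulrA ler_pdivrMr //.
by split=> //; lra.
Qed.

Section AxialPotential.
Variables (R : realFieldType) (d n m1 m2 m3 : nat).
Local Notation M1 := (m1%:R : R).
Local Notation M2 := (m2%:R : R).
Local Notation M3 := (m3%:R : R).
Local Notation N := (n%:R : R).
Implicit Types (u v : pt d.+1).

Lemma adj_axial_real u v : adj u v ->
  `|(u ord0)%:~R - (v ord0)%:~R| + `|(perp_norm u)%:~R - (perp_norm v)%:~R| <= 1 :> R.
Proof. by move=> /adj_axial; rewrite -(ler_int R) intrD !intr_norm !intrB. Qed.

Lemma adj_axial_sides u v : adj u v ->
  [\/ (u ord0)%:~R <= - M1 /\ (v ord0)%:~R <= - M1 :> R,
      - M1 < (u ord0)%:~R /\ - M1 < (v ord0)%:~R :> R |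
      (perp_norm u)%:~R = (perp_norm v)%:~R :> R].
Proof.
move=> /adj_axial uv; rewrite -[M1]/((m1%:Z)%:~R) -intrN !ler_int !ltr_int.
have [[? ?]|[[? ?]|->]] : (u ord0 <= - m1%:Z /\ v ord0 <= - m1%:Z) \/
    (- m1%:Z < u ord0 /\ - m1%:Z < v ord0) \/ perp_norm u = perp_norm v by lia.
- by constructor 1.
- by constructor 2.
- by constructor 3.
Qed.

Lemma shadow_inRL u : inRL n m1 m2 m3 u ->
  shadow M1 M2 M3 N (u ord0)%:~R (perp_norm u)%:~R.
Proof.
have natz (k : nat) : ((k%:Z)%:~R : R) = k%:R by [].
case=> [/inRhat_axial [/andP [t1 t2] s face]|/inL_axial [/andP [t1 t2] ->]].
- left; split; [|split].
  + by rewrite -!natz -intrN !ler_int t1 t2.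
  + by rewrite ler0z perp_norm_ge0 -natz ler_int.
  + by case: face => ->; rewrite ?intrN; [constructor 1 | constructor 2 | constructor 3].
- by right; split=> //; rewrite -!natz -!intrN !ler_int t1 t2.
Qed.

Variables (b c K : R).

Definition axial_potential u : R :=
  potential M2 M3 N K b c (u ord0)%:~R (perp_norm u)%:~R.

Lemma axial_potential_edge (tau : pt d.+1 -> pt d.+1 -> R) :
  1 <= K -> K * (M1 + M2) = M1 + M2 + 2 * M3 -> 0 <= c -> c * K <= b -> 1 < M1 + M2 ->
  (b + c) * M2 <= (b - c) * M3 ->
  (b + c) * M2 + 2 * c * M3 <= (b - c) * M1 ->
  b * (M1 + M2 + M3) + 2 * c * M3 <= (b - c) * N ->
  (forall u v, adj u v -> inRL n m1 m2 m3 u -> inRL n m1 m2 m3 v -> c <= tau u v) ->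
  (forall u v, adj u v -> inLam n u -> inLam n v ->
     ~ (inRL n m1 m2 m3 u /\ inRL n m1 m2 m3 v) -> b <= tau u v) ->
  forall u v, inLam n u -> inLam n v -> adj u v ->
  axial_potential u - axial_potential v <= tau u v.
Proof.
move=> K_ge1 K_M12 c0 cKb M12 F1 F2 F3 tau_RL tau_out u v Lu Lv Auv.
have cb : c <= b by nra.
have M2_0 : 0 <= M2 by rewrite ler0n.
have M3_0 : 0 <= M3 by rewrite ler0n.
have uv := adj_axial_real Auv.
have [[Su Sv]|not_RL] := pselect (inRL n m1 m2 m3 u /\ inRL n m1 m2 m3 v); last first.
  have := potential_lipschitz M2 M3 N K_ge1 c0 cKb uv.
  have := tau_out u v Auv Lu Lv not_RL; rewrite /axial_potential; lra.
have := tau_RL u v Auv Su Sv.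
have [Su' Sv'] := (shadow_inRL Su, shadow_inRL Sv).
rewrite /axial_potential !(shell_pot_shadow K_ge1 K_M12 c0 cb _ M2_0 M3_0 F1 F2 F3) ?ler0n //.
rewrite /shell_pot.
have step := shell_dist_step K_ge1 K_M12 M3_0 M12 Su' Sv' uv (adj_axial_sides Auv).
have : c * shell_dist M2 M3 K (u ord0)%:~R (perp_norm u)%:~R <=
       c * (shell_dist M2 M3 K (v ord0)%:~R (perp_norm v)%:~R + 1) by rewrite ler_wpM2l.
lra.
Qed.

Lemma axial_potential_origin :
  0 <= b -> b * M2 + c * (N + 2 * M3) <= b * N -> axial_potential (@zpt d.+1) <= 0.
Proof.
move=> b0 mu_le0; rewrite /axial_potential.
have -> : perp_norm (@zpt d.+1) = 0 by rewrite /perp_norm big1.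
rewrite /potential /zpt normr0 !addr0 mulr0 ge_max ge_min lexx /=.
by rewrite add0r subr_le0.
Qed.

Lemma axial_potential_sphere x : norm1 x = n%:Z ->
  b * M2 + c * (N + 2 * M3) <= axial_potential x.
Proof.
move=> xn; rewrite /axial_potential /potential.
have -> : `|(x ord0)%:~R| + (perp_norm x)%:~R = N :> R.
  by rewrite -intr_norm -intrD -norm1_axial xn.
by rewrite le_max addrCA subrr addr0 lexx orbT.
Qed.

End AxialPotential.

Lemma T_Lam_lower_bound (R : realType) d (tau : pt d.+1 -> pt d.+1 -> R)
  (a b eps delta : R) (n m1 m2 m3 : nat) :
  (forall x y, 0 <= tau x y) -> 0 < a -> a < b -> 0 <= delta ->
  eps < (b - a) / (2 * b + 3 * a) ->
  1 <= (m2%:R : R) -> m2%:R <= eps * m3%:R ->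
  eps * m3%:R <= eps ^+ 2 * m1%:R -> eps ^+ 2 * m1%:R <= eps ^+ 3 * n%:R ->
  E_event tau a b delta n m1 m2 m3 ->
  forall x : pt d.+1, norm1 x = n%:Z ->
  (a - delta) * (n + 2 * m3)%:R + b * m2%:R <= T_Lam tau n x (@zpt _).
Proof.
move=> tau_ge0 a0 ab delta0 eps_lt M2_1 M23 M31 M1N [tau_RL tau_out] x xn.
set c := Num.max (a - delta) 0.
have c0 : 0 <= c by rewrite le_max lexx orbT.
have ca : c <= a by rewrite ge_max; apply/andP; split; lra.
have [F1 F2 F3 M2_M3 M3_M1] :=
  scale_inequalities a0 ab c0 ca eps_lt (ler0n _ _) (ler0n _ _) (ler0n _ _) M2_1 M23 M31 M1N.
have bM2 : 0 <= b * m2%:R by apply: mulr_ge0; lra.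
have M12 : 1 < m1%:R + m2%:R :> R by lra.
have cK_le : c * (m1%:R + m2%:R + 2 * m3%:R) <= b * (m1%:R + m2%:R) by nra.
have [K [K_ge1 K_M12 cKb]] := exists_slope (lt_trans ltr01 M12) (ler0n _ _) cK_le.
have tau_RL_c u v : adj u v -> inRL n m1 m2 m3 u -> inRL n m1 m2 m3 v -> c <= tau u v.
  by move=> Auv Su Sv; case/andP: (tau_RL u v Auv Su Sv) => ? _; rewrite ge_max tau_ge0 andbT.
have tau_out_b u v : adj u v -> inLam n u -> inLam n v ->
    ~ (inRL n m1 m2 m3 u /\ inRL n m1 m2 m3 v) -> b <= tau u v.
  by move=> Auv Lu Lv notRL; case/andP: (tau_out u v Auv Lu Lv notRL).
have Lx : inLam n x by rewrite /inLam xn.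
have := potential_le_T_Lam
  (axial_potential_edge K_ge1 K_M12 c0 cKb M12 F1 F2 F3 tau_RL_c tau_out_b) Lx.
have b0 : 0 <= b by lra.
have mu_le0 : b * m2%:R + c * (n%:R + 2 * m3%:R) <= b * n%:R by nra.
have := @axial_potential_sphere R d n m2 m3 b c K x xn.
have := @axial_potential_origin R d n m2 m3 b c K b0 mu_le0.
have : (a - delta) * (n + 2 * m3)%:R <= c * (n%:R + 2 * m3%:R).
  by rewrite natrD natrM ler_wpM2r ?le_max ?lexx // addr_ge0 ?mulr_ge0 ?ler0n.
lra.
Qed.

Lemma T_Lam_upper_bound (R : realType) d (tau : pt d.+2 -> pt d.+2 -> R)
  (a b eps delta : R) (n m1 m2 m3 : nat) :
  (forall x y, 0 <= tau x y) -> 0 < a -> a < b ->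
  eps < (b - a) / (2 * b + 3 * a) ->
  1 <= (m2%:R : R) -> m2%:R <= eps * m3%:R ->
  eps * m3%:R <= eps ^+ 2 * m1%:R -> eps ^+ 2 * m1%:R <= eps ^+ 3 * n%:R ->
  E_event tau a b delta n m1 m2 m3 ->
  forall y : pt d.+2, inRhat m1 m2 m3 y ->
  T_Lam tau n (scal (- n%:Z) (@e1 _)) y <= a * (n + 2 * m3)%:R + a * m2%:R.
Proof.
move=> tau_ge0 a0 ab eps_lt M2_1 M23 M31 M1N [tau_RL _] y Ry.
have [_ _ F3 _ _] := scale_inequalities a0 ab (lexx 0) (ltW a0) eps_lt
  (ler0n _ m1) (ler0n _ m3) (ler0n _ n) M2_1 M23 M31 M1N.
have m123 : (m1 + m2 + m3 <= n)%N.
  by rewrite -(ler_nat R) !natrD -(ler_pM2l (lt_trans a0 ab)); lra.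
have tau_RL_a u v : adj u v -> inRL n m1 m2 m3 u -> inRL n m1 m2 m3 v -> tau u v <= a.
  by move=> Auv Su Sv; case/andP: (tau_RL u v Auv Su Sv).
rewrite -mulrDr -natrD; apply: T_Lam_le tau_ge0 _.
by apply: reach_Rhat Ry => //; [exact: ltW | lia | lia].
Qed.

Unset Implicit Arguments.

Theorem lemma1 (R : realType) (d : nat) (tau : pt d -> pt d -> R)
  (a b eps delta : R) (n m1 m2 m3 : nat) :
  (2 <= d)%N ->
  (forall x y, tau x y = tau y x) ->
  (forall x y, 0 <= tau x y) ->
  0 < a -> a < b ->
  eps < (b - a) / (2 * b + 3 * a) ->
  (0 < n)%N -> (0 < m1)%N -> (0 < m2)%N -> (0 < m3)%N ->
  1 <= (m2%:R : R) -> m2%:R <= eps * m3%:R ->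
  eps * m3%:R <= eps ^+ 2 * m1%:R -> eps ^+ 2 * m1%:R <= eps ^+ 3 * n%:R ->
  0 < delta ->
  E_event tau a b delta n m1 m2 m3 ->
  (forall y : pt d, inRhat m1 m2 m3 y ->
     T_Lam tau n (scal (- n%:Z) (@e1 d)) y <= a * (n + 2 * m3)%:R + a * m2%:R) /\
  (forall x : pt d, norm1 x = n%:Z ->
     (a - delta) * (n + 2 * m3)%:R + b * m2%:R <= T_Lam tau n x (@zpt d)).
Proof.
case: d tau => [|[|d]] tau // _ _ tau_ge0 a0 ab eps_lt _ _ _ _ M2_1 M23 M31 M1N delta0 E.
split; first exact: T_Lam_upper_bound tau_ge0 a0 ab eps_lt M2_1 M23 M31 M1N E.
exact: T_Lam_lower_bound tau_ge0 a0 ab (ltW delta0) eps_lt M2_1 M23 M31 M1N E.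
Qed.
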